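(* If a database with integrity constraints $\langle\mathcal{I},\eta\rangle$ (in the setting described below) is consistent, then it has a possible world $U$ such that $|\mathit{Dom}(U)|=O(\mathit{size}(\mathcal{I})+\mathit{size}(\eta))$, where the constant in the $O$-notation depends only on the fixed database schema.
   Context: Constants: $\mathit{Dom}=\{\bot,1,2,\dots\}$ with $\bot$ the null value, $\mathit{Dom}_d=\{1,2,\dots\}$; the only built-in relations are $=$ and $\le$. The set of base predicate symbols (hence the maximum arity) is fixed. For a set $S$ of atoms, $\mathit{Dom}(S)$ is the set of constants occurring in $S$; $\mathit{size}(\cdot)$ is the size of the representation. Facts are ground atoms; definite facts contain no $\bot$. For tuples, $t\preceq t'$ if each $t_i=t'_i$ or $t_i=\bot$; $a\approx b$ if some $s$ has $a\preceq s,b\preceq s$. For a set $S$ of facts: $S^\Downarrow=\{a:\exists b\in S,a\preceq b\}$, $S^\Uparrow=\{a:\exists b\in S,b\preceq a\}$, $S^\approx=\{a:\exists b\in S,b\approx a\}$, $S^\sim=S^\approx\setminus S^\Downarrow$. A database is $\mathcal{I}=\langle D,E\rangle$, $D,E$ finite sets of base facts; $\mathcal{I}_t=D^\Downarrow$, $\mathcal{I}_u=D^\sim\setminus E^\Uparrow$; a possible world of $\mathcal{I}$ is a set $W$ of definite facts with $\mathcal{I}_t\subseteq W^\Downarrow$ and $W\subseteq\mathcal{I}_t\cup\mathcal{I}_u$. Integrity constraints have the form $\exists X\,\forall Y\,(A_1\wedge\dots\wedge A_k\rightarrow B_1\vee\dots\vee B_m)$, atoms without $\bot$ over base and built-in predicates,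 every variable in $X\cup Y$ and occurring in some base-predicate $A_i$. A possible world of $\langle\mathcal{I},\eta\rangle$ is a possible world of $\mathcal{I}$ satisfying every constraint of $\eta$ (as an interpretation with domain $\mathit{Dom}_d$); $\langle\mathcal{I},\eta\rangle$ is consistent if one exists. *)

From Stdlib Require Import List Arith.
Import ListNotations.

(* Constants: Dom = nat, with 0 playing the role of the null value ⊥,
   and Dom_d = {1,2,...} = the nonzero naturals. *)
Definition null : nat := 0.

(* A fixed schema: predicate symbol p (a nat) is a base predicate iff
   p < length sch, and its arity is nth p sch 0. *)
Definition schema := list nat.

Record fact := mkFact { fpred : nat; fargs : list nat }.

Definition base_fact (sch : schema) (f : fact) : Prop :=
  fpred f < length sch /\ length (fargs f) = nth (fpred f) sch 0.

Definition definite (f : fact) : Prop := Forall (fun c => c <> null) (fargs f).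

Definition fset := fact -> Prop.

Definition fle (a b : fact) : Prop :=
  fpred a = fpred b /\ Forall2 (fun x y => x = y \/ x = null) (fargs a) (fargs b).

Definition fapprox (a b : fact) : Prop := exists s, fle a s /\ fle b s.

Definition down (S : fset) : fset := fun a => exists b, S b /\ fle a b.
Definition up (S : fset) : fset := fun a => exists b, S b /\ fle b a.
Definition approxS (S : fset) : fset := fun a => exists b, S b /\ fapprox b a.
Definition tildeS (S : fset) : fset := fun a => approxS S a /\ ~ down S a.

Definition of_list (l : list fact) : fset := fun a => In a l.

Record database := mkDB { dbD : list fact; dbE : list fact }.

Definition It (I : database) : fset := down (of_list (dbD I)).
Definition Iu (I : database) : fset :=
  fun a => tildeS (of_list (dbD I)) a /\ ~ up (of_list (dbE I)) a.

Definition wf_database (sch : schema) (I : database) : Prop :=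
  Forall (base_fact sch) (dbD I) /\ Forall (base_fact sch) (dbE I).

Definition possible_world_db (I : database) (W : fset) : Prop :=
  (forall a, W a -> definite a) /\
  (forall a, It I a -> down W a) /\
  (forall a, W a -> It I a \/ Iu I a).

(* Integrity constraints  ∃X ∀Y (A1 ∧ ... ∧ Ak -> B1 ∨ ... ∨ Bm). *)
Inductive term := TVar (v : nat) | TCst (c : nat).

Inductive atom :=
  | ABase (p : nat) (ts : list term)
  | AEq (s t : term)
  | ALe (s t : term).

Record constraint := mkIC {
  ic_ex : list nat;
  ic_all : list nat;
  ic_body : list atom;
  ic_head : list atom
}.

Definition term_vars (t : term) : list nat :=
  match t with TVar v => [v] | TCst _ => [] end.
Definition term_csts (t : term) : list nat :=
  match t with TVar _ => [] | TCst c => [c] end.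

Definition atom_terms (a : atom) : list term :=
  match a with ABase _ ts => ts | AEq s t => [s; t] | ALe s t => [s; t] end.

Definition atom_vars (a : atom) : list nat := flat_map term_vars (atom_terms a).

Definition base_atom_vars (a : atom) : list nat :=
  match a with ABase _ ts => flat_map term_vars ts | _ => [] end.

Definition wf_atom (sch : schema) (a : atom) : Prop :=
  Forall (fun t => Forall (fun c => c <> null) (term_csts t)) (atom_terms a) /\
  match a with
  | ABase p ts => p < length sch /\ length ts = nth p sch 0
  | _ => True
  end.

Definition wf_constraint (sch : schema) (ic : constraint) : Prop :=
  (forall v, In v (ic_ex ic) -> ~ In v (ic_all ic)) /\
  Forall (wf_atom sch) (ic_body ic ++ ic_head ic) /\
  (forall a v, In a (ic_body ic ++ ic_head ic) -> In v (atom_vars a) ->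
     In v (ic_ex ic ++ ic_all ic)) /\
  (forall v, In v (ic_ex ic ++ ic_all ic) ->
     exists a, In a (ic_body ic) /\ In v (base_atom_vars a)).

Definition eval_term (nu : nat -> nat) (t : term) : nat :=
  match t with TVar v => nu v | TCst c => c end.

Definition holds (W : fset) (nu : nat -> nat) (a : atom) : Prop :=
  match a with
  | ABase p ts => W (mkFact p (map (eval_term nu) ts))
  | AEq s t => eval_term nu s = eval_term nu t
  | ALe s t => eval_term nu s <= eval_term nu t
  end.

Definition satisfies (W : fset) (ic : constraint) : Prop :=
  exists nu1 : nat -> nat,
    (forall x, In x (ic_ex ic) -> nu1 x <> null) /\
    forall nu2 : nat -> nat,
      (forall y, In y (ic_all ic) -> nu2 y <> null) ->
      let nu := fun v => if in_dec Nat.eq_dec v (ic_ex ic) then nu1 v else nu2 v in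
      Forall (holds W nu) (ic_body ic) -> Exists (holds W nu) (ic_head ic).

Definition possible_world (I : database) (eta : list constraint) (W : fset) : Prop :=
  possible_world_db I W /\ Forall (satisfies W) eta.

Definition consistent (I : database) (eta : list constraint) : Prop :=
  exists W, possible_world I eta W.

(* Sizes: number of symbols of the representation. *)
Definition size_fact (f : fact) : nat := 1 + length (fargs f).
Definition size_facts (l : list fact) : nat := fold_right (fun f n => size_fact f + n) 0 l.
Definition size_db (I : database) : nat := size_facts (dbD I) + size_facts (dbE I).

Definition size_atom (a : atom) : nat := 1 + length (atom_terms a).
Definition size_atoms (l : list atom) : nat := fold_right (fun a n => size_atom a + n) 0 l.
Definition size_constraint (ic : constraint) : nat :=
  1 + length (ic_ex ic) + length (ic_all ic) + size_atoms (ic_body ic) + size_atoms (ic_head ic).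
Definition size_constraints (l : list constraint) : nat :=
  fold_right (fun ic n => size_constraint ic + n) 0 l.

(* |Dom(U)| <= n : the constants occurring in U are among n values. *)
Definition dom_card_le (U : fset) (n : nat) : Prop :=
  exists L : list nat, length L <= n /\
    forall f c, U f -> In c (fargs f) -> In c L.

(* Take any possible world W.  Keep only the facts of W all of whose constants
   lie in a list L made of the constants of one fact of W above each fact of D
   and the constants written in the heads of the constraints; |L| is linear in
   the input.  Being a subset of W, the restriction still lies within
   I_t ∪ I_u, and the chosen facts keep I_t covered.  A constraint body true in
   the restriction is true in W, so some head atom holds in W; its variables are
   bound through base atoms of the body, whose facts have all constants in L,
   so that head fact survives the restriction. *)

From Stdlib Require Import List Lia.
Import ListNotations.

Definition restrict (W : fset) (L : list nat) : fset :=
  fun f => W f /\ incl (fargs f) L.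

Lemma fle_refl a : fle a a.
Proof.
  split; [reflexivity|].
  induction (fargs a); constructor; auto.
Qed.

Lemma fle_trans a b c : fle a b -> fle b c -> fle a c.
Proof.
  intros [Hab Hargs_ab] [Hbc Hargs_bc]; split; [congruence|].
  revert Hargs_bc; generalize (fargs c) as args.
  induction Hargs_ab as [|x y l l' Hxy _ IH]; intros args Hl;
    inversion Hl as [|? z ? ? Hyz]; subst; constructor; auto.
  destruct Hxy as [-> | ->]; destruct Hyz as [-> | ->]; auto.
Qed.

Lemma holds_mono (W W' : fset) nu a :
  (forall f, W f -> W' f) -> holds W nu a -> holds W' nu a.
Proof. destruct a; simpl; auto. Qed.

Lemma witnesses_constants (W : fset) (D : list fact) :
  (forall d, In d D -> exists w, W w /\ fle d w) ->
  exists L, length L <= size_facts D /\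
    forall d, In d D -> exists w, W w /\ fle d w /\ incl (fargs w) L.
Proof.
  induction D as [|d D IH]; intros Hcov.
  - exists []; split; [auto | intros _ []].
  - destruct (Hcov d (or_introl eq_refl)) as [w [Hw Hdw]].
    destruct IH as [L [HL HLcov]]; [intros; apply Hcov; right; assumption|].
    exists (fargs w ++ L); split.
    + rewrite length_app, <- (Forall2_length (proj2 Hdw)); simpl.
      unfold size_fact; lia.
    + intros d' [<- | Hd'].
      * exists w; split; [|split]; auto using incl_appl, incl_refl.
      * destruct (HLcov d' Hd') as [w' [Hw' [Hle Hincl]]].
        exists w'; split; [|split]; auto using incl_appr.
Qed.

Lemma possible_world_db_restrict I W L :
  possible_world_db I W ->
  (forall d, In d (dbD I) -> exists w, W w /\ fle d w /\ incl (fargs w) L) ->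
  possible_world_db I (restrict W L).
Proof.
  intros [Hdef [_ Hsub]] HL; repeat split.
  - intros a [Ha _]; auto.
  - intros a [d [Hd Hle]].
    destruct (HL d Hd) as [w [Hw [Hdw Hincl]]].
    exists w; split; [split; assumption | eapply fle_trans; eassumption].
  - intros a [Ha _]; auto.
Qed.

Definition head_csts (ic : constraint) : list nat :=
  flat_map (fun a => flat_map term_csts (atom_terms a)) (ic_head ic).

Lemma length_csts_atoms l :
  length (flat_map (fun a => flat_map term_csts (atom_terms a)) l) <= size_atoms l.
Proof.
  assert (Hterms : forall ts, length (flat_map term_csts ts) <= length ts)
    by (induction ts as [|[v|c] ts IH]; simpl; lia).
  induction l as [|a l IH]; simpl; [lia|].
  rewrite length_app; specialize (Hterms (atom_terms a)); unfold size_atom; lia.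
Qed.

Lemma length_head_csts eta :
  length (flat_map head_csts eta) <= size_constraints eta.
Proof.
  induction eta as [|ic eta IH]; simpl; [lia|].
  assert (Hic : length (head_csts ic) <= size_atoms (ic_head ic))
    by apply length_csts_atoms.
  rewrite length_app; unfold size_constraint; lia.
Qed.

Lemma base_atom_var_in_restrict W L nu b v :
  holds (restrict W L) nu b -> In v (base_atom_vars b) -> In (nu v) L.
Proof.
  destruct b as [p ts| |]; simpl; [|tauto..].
  intros [_ Hincl] Hv; apply Hincl; simpl.
  apply in_flat_map in Hv as [[w|c] [Ht Hv]]; simpl in Hv; [|tauto].
  destruct Hv as [<- | []]; exact (in_map (eval_term nu) _ _ Ht).
Qed.

Lemma head_holds_restrict sch W L ic nu a :
  wf_constraint sch ic -> incl (head_csts ic) L ->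
  Forall (holds (restrict W L) nu) (ic_body ic) ->
  In a (ic_head ic) -> holds W nu a -> holds (restrict W L) nu a.
Proof.
  intros [_ [_ [Hclosed Hsafe]]] Hcsts Hbody Ha Hwa.
  destruct a as [p ts| |]; simpl in *; auto.
  split; [exact Hwa|]; intros c Hc.
  apply in_map_iff in Hc as [[v|c'] [<- Ht]]; simpl.
  - assert (Hv : In v (ic_ex ic ++ ic_all ic)).
    { apply (Hclosed (ABase p ts)); [apply in_or_app; right; exact Ha|].
      apply in_flat_map; exists (TVar v); simpl; auto. }
    destruct (Hsafe v Hv) as [b [Hb Hvb]].
    rewrite Forall_forall in Hbody.
    exact (base_atom_var_in_restrict W L nu b v (Hbody b Hb) Hvb).
  - apply Hcsts, in_flat_map; exists (ABase p ts); split; [exact Ha|].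
    apply in_flat_map; exists (TCst c'); simpl; auto.
Qed.

Lemma satisfies_restrict sch W L ic :
  wf_constraint sch ic -> incl (head_csts ic) L ->
  satisfies W ic -> satisfies (restrict W L) ic.
Proof.
  intros Hwf Hcsts [nu1 [Hnu1 Hsat]]; exists nu1; split; [exact Hnu1|].
  intros nu2 Hnu2 nu Hbody.
  assert (HbodyW : Forall (holds W nu) (ic_body ic)).
  { eapply Forall_impl; [|exact Hbody].
    intros a; apply holds_mono; intros f [Hf _]; exact Hf. }
  destruct (proj1 (Exists_exists _ _) (Hsat nu2 Hnu2 HbodyW)) as [a [Ha Hwa]].
  apply Exists_exists; exists a; split; [exact Ha|].
  exact (head_holds_restrict sch W L ic nu a Hwf Hcsts Hbody Ha Hwa).
Qed.

Theorem lemma1 :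
  forall sch : schema, exists C : nat,
    forall (I : database) (eta : list constraint),
      wf_database sch I ->
      Forall (wf_constraint sch) eta ->
      consistent I eta ->
      exists U, possible_world I eta U /\
        dom_card_le U (C * (size_db I + size_constraints eta)).
Proof.
  intros sch; exists 1; intros I eta _ Hwf [W [Hworld Hsat]].
  destruct (witnesses_constants W (dbD I)) as [LD [HLD HLDcov]].
  { intros d Hd; destruct Hworld as [_ [Hcov _]].
    exact (Hcov d (ex_intro _ d (conj Hd (fle_refl d)))). }
  set (L := LD ++ flat_map head_csts eta).
  exists (restrict W L); split; [split|].
  - apply possible_world_db_restrict; [exact Hworld|].
    intros d Hd; destruct (HLDcov d Hd) as [w [Hw [Hle Hincl]]].
    exists w; split; [|split]; [assumption..| apply incl_appl, Hincl].
  - rewrite Forall_forall in *; intros ic Hic.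
    apply (satisfies_restrict sch); auto.
    intros c Hc; apply in_or_app; right; apply in_flat_map; exists ic; auto.
  - exists L; split.
    + unfold L; rewrite length_app; pose proof (length_head_csts eta).
      unfold size_db; lia.
    + intros f c [_ Hincl]; apply Hincl.
Qed.
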